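(* Let $\Gamma=(N,A,u)$ be a game and suppose there exist a matching $M$ of the strategy sets and a transitive subgroup $H$ of $S_N$ such that $M_\pi$ is an automorphism of $\Gamma$ for every $\pi\in H$. Then for all $i,j\in N$ we have $u_i(s)=u_j(s)$ for all $s\in M$.
   Context: A (finite normal-form) game $\Gamma=(N,A,u)$ consists of a finite set $N$ of $n\ge 2$ players, a finite non-empty strategy set $A_i$ for each $i\in N$ (all of the same cardinality), $A=\times_{i\in N}A_i$, and utility functions $u_i:A\to\mathbb{R}$. A game bijection $g=(\pi;(\tau_i)_{i\in N})$ of $\Gamma$ to itself consists of a permutation $\pi$ of $N$ and bijections $\tau_i:A_i\to A_{\pi(i)}$; $g.i=\pi(i)$ and $g.s$ is the profile with $(g.s)_{\pi(i)}=\tau_i(s_i)$. An automorphism is a game bijection with $u_i(s)=u_{g.i}(g.s)$ for all $i\in N,s\in A$. A matching of $A_1,\dots,A_n$ is a set $M\subseteq A$ of $n$-tuples such that every element of every $A_i$ appears in exactly one tuple of $M$; it induces bijections $M_{ij}:A_i\to A_j$ sending $a_i$ to the $j$-th entry of the unique tuple containing $a_i$. For $\pi\in S_N$, $M_\pi=(\pi;(M_{i\pi(i)})_{i\in N})$. *)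

From HB Require Import structures.
From mathcomp Require Import all_boot all_order all_algebra all_fingroup.
Set Implicit Arguments. Unset Strict Implicit. Unset Printing Implicit Defensive.

Definition profile (n : nat) (A : 'I_n -> finType) := {dffun forall i : 'I_n, A i}.

Definition tr (n : nat) (A : 'I_n -> finType) (i j : 'I_n) (e : i = j) (a : A i) : A j :=
  eq_rect i (fun k => A k : Type) a j e.

(* Action g.s of a game bijection g = (pi; (tau_i)_i) on profiles:
   (g.s)_(pi i) = tau_i (s_i), i.e. (g.s)_j = tau_(pi^-1 j) (s_(pi^-1 j)). *)
Definition gact (n : nat) (A : 'I_n -> finType) (pi : {perm 'I_n})
  (tau : forall i, A i -> A (pi i)) (s : profile A) : profile A :=
  [ffun j : 'I_n => tr (permKV pi j) (tau (pi^-1 j)%g (s (pi^-1 j)%g))].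

Definition is_automorphism (R : Type) (n : nat) (A : 'I_n -> finType)
  (u : 'I_n -> profile A -> R) (pi : {perm 'I_n})
  (tau : forall i, A i -> A (pi i)) : Prop :=
  (forall i, bijective (tau i)) /\
  (forall (i : 'I_n) (s : profile A), u i s = u (pi i) (gact tau s)).

Definition is_matching (n : nat) (A : 'I_n -> finType) (M : {set profile A}) : Prop :=
  forall (i : 'I_n) (a : A i), exists! s : profile A, s \in M /\ s i = a.

Lemma matching_ex (n : nat) (A : 'I_n -> finType) (M : {set profile A})
  (HM : is_matching M) (i : 'I_n) (a : A i) :
  exists s : profile A, (s \in M) && (s i == a).
Proof.
have [s [[sM si] _]] := HM i a; exists s; by rewrite sM si eqxx.
Qed.

Definition Mij (n : nat) (A : 'I_n -> finType) (M : {set profile A})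
  (HM : is_matching M) (i j : 'I_n) (a : A i) : A j :=
  (xchoose (@matching_ex n A M HM i a)) j.

Definition Mpi_tau (n : nat) (A : 'I_n -> finType) (M : {set profile A})
  (HM : is_matching M) (pi : {perm 'I_n}) : forall i, A i -> A (pi i) :=
  fun i => @Mij n A M HM i (pi i).
Arguments Mij {n A M} HM i j a.

From Pilot Require Import Defs.
From mathcomp Require Import all_boot all_order all_algebra all_fingroup.

(* Every game bijection of the form M_pi fixes each tuple s of M: its
   (pi i)-th entry is M_{i, pi i}(s_i) = s_(pi i).  So if M_pi is an
   automorphism, u_i(s) = u_(pi i)(M_pi.s) = u_(pi i)(s), and transitivity
   of H provides, for any i and j, some pi in H with pi i = j. *)

Section MatchingAutomorphisms.

Variables (n : nat) (A : 'I_n -> finType).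

Lemma tr_profile (s : profile A) (i j : 'I_n) (e : i = j) : tr e (s i) = s j.
Proof. by case: j / e. Qed.

Variables (M : {set profile A}) (HM : is_matching M).

Lemma Mij_matched (s : profile A) (i j : 'I_n) : s \in M -> Mij HM i j (s i) = s j.
Proof.
move=> sM; rewrite /Mij.
have /andP[tM /eqP ti] := xchooseP (matching_ex HM (s i)).
have [s0 [_ uniq_s]] := HM i (s i).
by rewrite -(uniq_s _ (conj tM ti)) (uniq_s s (conj sM erefl)).
Qed.

Lemma gact_Mpi_tau_id (pi : {perm 'I_n}) (s : profile A) :
  s \in M -> Defs.gact (Mpi_tau HM pi) s = s.
Proof.
move=> sM; apply/ffunP => j.
by rewrite ffunE /Mpi_tau Mij_matched // tr_profile.
Qed.

End MatchingAutomorphisms.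

Theorem mainTheorem12 (R : realFieldType) (n : nat) (A : 'I_n -> finType)
  (u : 'I_n -> profile A -> R)
  (Hn : (2 <= n)%N)
  (Hne : forall i, (0 < #|A i|)%N)
  (Hcard : forall i j, #|A i| = #|A j|)
  (M : {set profile A}) (HM : is_matching M)
  (H : {group {perm 'I_n}})
  (Htrans : [transitive H, on [set: 'I_n] | 'P])
  (Haut : forall pi, pi \in H -> is_automorphism u (Mpi_tau HM pi)) :
  forall (i j : 'I_n) (s : profile A), s \in M -> u i s = u j s.
Proof.
move=> i j s sM.
have /orbitP[pi piH <-] : j \in orbit 'P H i by rewrite (atransP Htrans) ?inE.
have [_ u_invariant] := Haut pi piH.
by rewrite u_invariant gact_Mpi_tau_id.
Qed.
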